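(* Let $t=t(n)$. If $t=o(\log n)$, then $$\lim_{n\to\infty}\frac{\log M_{K_{t,t}}(n)}{\binom{n}{2}}=1.$$ If $t=c\log n$ for some constant $c>0$, then $$\lim_{n\to\infty}\frac{\log M_{K_{t,t}}(n)}{\binom{n}{2}}\leq1-2^{-\frac{2}{c}}.$$
   Context: Logarithms are base 2. $K_{t,t}$ is the complete bipartite graph with both parts of size $t$. For graphs $G,G'$ on the same vertex set $[n]$, their symmetric difference $G\oplus G'$ is the graph on $[n]$ whose edge set consists of all edges belonging to exactly one of $G,G'$. For a graph $L$, $M_{L}(n)$ denotes the maximum possible size of a family $\mathcal{G}$ of graphs on vertex set $[n]$ such that for any two distinct $G,G'\in\mathcal{G}$, $G\oplus G'$ contains $L$ as a subgraph. *)

From Stdlib Require Import Reals.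
From Coquelicot Require Import Coquelicot.
From mathcomp Require Import all_boot.

Set Implicit Arguments.
Unset Strict Implicit.
Unset Printing Implicit Defensive.

Definition is_graph (n : nat) (G : {set {set 'I_n}}) : bool :=
  [forall e in G, #|e| == 2%N].

Definition symdiff (n : nat) (G G' : {set {set 'I_n}}) : {set {set 'I_n}} :=
  (G :\: G') :|: (G' :\: G).

Definition contains_subgraph (m n : nat) (L : {set {set 'I_m}})
    (G : {set {set 'I_n}}) : bool :=
  [exists f : {ffun 'I_m -> 'I_n}, injectiveb f && [forall e in L, f @: e \in G]].

Definition Ktt (t : nat) : {set {set 'I_(t + t)}} :=
  [set [set lshift t i; rshift t j] | i : 'I_t, j : 'I_t].

Definition admissible (m n : nat) (L : {set {set 'I_m}})
    (F : {set {set {set 'I_n}}}) : bool :=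
  [forall G in F, is_graph G] &&
  [forall G in F, forall G' in F, (G != G') ==> contains_subgraph L (symdiff G G')].

Definition M (m : nat) (L : {set {set 'I_m}}) (n : nat) : nat :=
  \max_(F : {set {set {set 'I_n}}} | admissible L F) #|F|.

Definition log2 (x : R) : R := (ln x / ln 2)%R.

Definition ratio (t : nat -> nat) (n : nat) : R :=
  (log2 (INR (M (Ktt (t n)) n)) / INR 'C(n, 2))%R.

From Stdlib Require Import Reals Lra Psatz.
From Coquelicot Require Import Coquelicot.
From mathcomp Require Import all_boot zify.

Set Implicit Arguments.
Unset Strict Implicit.
Unset Printing Implicit Defensive.

(* Write N = 'C(n, 2).  Lower bound: a maximum admissible family F is a
   covering code, i.e. every graph is G (+) D with G in F and D empty or
   K_{t,t}-free, so 2^N <= M * #(K_{t,t}-free graphs).  By Kovari-Sos-Turan,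
   when (8r)^(t+1) <= n every K_{t,t}-free graph has at most N/r edges, and
   for any q > 0 there are at most (q+1)^N / q^(N - N/r) graphs that sparse;
   for t = o(log n) this holds for every fixed r, giving log M >= (1 - o(1)) N.
   Upper bound: members of an admissible family are determined by their edges
   outside any K_{t,t}-free graph D0, so M <= 2^(N - |D0|).  Counting the at
   most n^(2t) copies of K_{t,t} shows that some graph with pN edges is
   K_{t,t}-free as soon as n^2 p^t < 1, which for t ~ c log n holds for every
   p < 2^(-2/c). *)

Open Scope nat_scope.

Lemma card_bigcup_le (T I : finType) (P : pred I) (F : I -> {set T}) :
  #|\bigcup_(i | P i) F i| <= \sum_(i | P i) #|F i|.
Proof.
elim/big_rec2: _ => [|i k U _ leUk]; first by rewrite cards0.
by rewrite (leq_trans (leq_card_setU _ _).1) ?leq_add2l.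
Qed.

Lemma card_le_sum_cover (T I : finType) (A : {set T}) (P : pred I) (F : I -> {set T}) :
  (forall x, x \in A -> exists2 i, P i & x \in F i) -> #|A| <= \sum_(i | P i) #|F i|.
Proof.
move=> coverA; apply: leq_trans (card_bigcup_le P F); apply/subset_leq_card/subsetP.
by move=> x /coverA [i Pi xFi]; apply/bigcupP; exists i.
Qed.

Lemma sum_mem_card (T : finType) (B : {pred T}) : \sum_x (x \in B : nat) = #|B|.
Proof. by rewrite -sum1_card [RHS]big_mkcond; apply: eq_bigr => x _; case: (x \in B). Qed.

Lemma card_small_subsets (T : finType) (A : {set T}) (k q : nat) : 0 < q -> k <= #|A| ->
  #|[set D : {set T} | (D \subset A) && (#|D| <= k)]| * q ^ (#|A| - k) <= q.+1 ^ #|A|.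
Proof.
move=> q_gt0 leq_kA.
have -> : #|[set D : {set T} | (D \subset A) && (#|D| <= k)]| = \sum_(i < k.+1) 'C(#|A|, i).
  rewrite -sum1_card (partition_big (fun D : {set T} => inord #|D| : 'I_k.+1) predT) //=.
  apply: eq_bigr => i _; rewrite -(cards_draws A i) -sum1_card; apply: eq_bigl => D.
  rewrite !inE; case: (D \subset A) => //=.
  case: (leqP #|D| k) => h /=; first by rewrite -val_eqE /= inordK.
  by apply/esym/negP => /eqP E; have := ltn_ord i; lia.
rewrite big_distrl /= -[q.+1]addn1 expnDn.
apply: (@leq_trans (\sum_(i < k.+1) 'C(#|A|, i) * (q ^ (#|A| - i) * 1 ^ i))).
  apply: leq_sum => i _; rewrite exp1n muln1 leq_mul2l leq_pexp2l ?orbT //.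
  by have := ltn_ord i; lia.
rewrite (big_ord_widen #|A|.+1 (fun i => 'C(#|A|, i) * (q ^ (#|A| - i) * 1 ^ i))) //.
by rewrite [X in X <= _]big_mkcond /=; apply: leq_sum => i _; case: (i < k.+1).
Qed.

Lemma card_supersets_le (T : finType) (A X : {set T}) (m : nat) : X \subset A ->
  #|[set D : {set T} | [&& D \subset A, #|D| == m & X \subset D]]| <= 'C(#|A| - #|X|, m - #|X|).
Proof.
move=> sXA.
have injD : {in [set D : {set T} | [&& D \subset A, #|D| == m & X \subset D]] &,
    injective (fun D => D :\: X)}.
  move=> D D'; rewrite !inE => /and3P [_ _ sXD] /and3P [_ _ sXD'] eqDX.
  apply/setP => y; case: (boolP (y \in X)) => yX.
    by rewrite (subsetP sXD _ yX) (subsetP sXD' _ yX).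
  by move/setP: eqDX => /(_ y); rewrite !inE yX.
rewrite -(card_in_imset injD) -(cardsDS sXA) -cards_draws.
apply/subset_leq_card/subsetP => _ /imsetP [D + ->]; rewrite !inE => /and3P [sDA /eqP <- sXD].
by rewrite setSD //= cardsDS.
Qed.

(** * Admissible families *)

Section Graphs.
Variable n : nat.
Local Notation V := 'I_n.

Definition edges : {set {set V}} := [set e : {set V} | #|e| == 2].

Lemma card_edges : #|edges| = 'C(n, 2).
Proof. by rewrite card_draws card_ord. Qed.

Lemma is_graphE (G : {set {set V}}) : is_graph G = (G \subset edges).
Proof.
apply/forall_inP/subsetP => H e He; first by rewrite inE; exact: H.
by have := H e He; rewrite inE.
Qed.

Lemma symdiffC (G H : {set {set V}}) : symdiff G H = symdiff H G.
Proof. by rewrite /symdiff setUC. Qed.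

Lemma symdiffK (G H : {set {set V}}) : symdiff G (symdiff G H) = H.
Proof. by apply/setP => x; rewrite !inE; case: (x \in G); case: (x \in H). Qed.

Lemma symdiffG0 (G : {set {set V}}) : symdiff G set0 = G.
Proof. by apply/setP => x; rewrite !inE; case: (x \in G). Qed.

Lemma symdiff_subset (A G H : {set {set V}}) :
  G \subset A -> H \subset A -> symdiff G H \subset A.
Proof. by move=> sGA sHA; rewrite subUset !(subset_trans (subsetDl _ _)). Qed.

Lemma symdiff_subsetD (D G H : {set {set V}}) :
  G :\: D = H :\: D -> symdiff G H \subset D.
Proof.
move=> /setP eqGH; apply/subsetP => x; rewrite !inE => /orP [] /andP [nx x_in];
  apply: contraNT nx => xD; have := eqGH x; rewrite !inE xD x_in //= => ->.
Qed.

Lemma contains_subgraphS m (L : {set {set 'I_m}}) (G H : {set {set V}}) :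
  G \subset H -> contains_subgraph L G -> contains_subgraph L H.
Proof.
move=> /subsetP sGH /existsP [f /andP [f_inj /forall_inP fL]]; apply/existsP; exists f.
by rewrite f_inj; apply/forall_inP => e /fL; exact: sGH.
Qed.

End Graphs.

Section MaxFamily.
Variables (n m : nat) (L : {set {set 'I_m}}).
Local Notation V := 'I_n.

Lemma leq_card_M (F : {set {set {set V}}}) : admissible L F -> #|F| <= M L n.
Proof. exact: (@leq_bigmax_cond _ (fun F => admissible L F) (fun F => #|F|)). Qed.

Lemma M_leq k : (forall F : {set {set {set V}}}, admissible L F -> #|F| <= k) -> M L n <= k.
Proof. by move/bigmax_leqP. Qed.

Lemma M_gt0 : 0 < M L n.
Proof.
have adm1 : admissible L [set (set0 : {set {set V}})].
  apply/andP; split; apply/forall_inP => G /set1P ->; first by rewrite is_graphE sub0set.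
  by apply/forall_inP => G' /set1P ->; rewrite eqxx.
by have := leq_card_M adm1; rewrite cards1.
Qed.

Lemma M_attained : exists2 F : {set {set {set V}}}, admissible L F & #|F| = M L n.
Proof.
have adm0 : admissible L (set0 : {set {set {set V}}}).
  by apply/andP; split; apply/forall_inP => G; rewrite inE.
case: (arg_maxnP (fun F : {set {set {set V}}} => #|F|) adm0) => F admF maxF.
by exists F => //; apply/eqP; rewrite eqn_leq leq_card_M // M_leq.
Qed.

Lemma M_le_exp_binom : M L n <= 2 ^ 'C(n, 2).
Proof.
apply: M_leq => F /andP [/forall_inP graphF _].
rewrite -card_edges -card_powerset; apply/subset_leq_card/subsetP => G GF.
by rewrite inE -is_graphE graphF.
Qed.

(* Two members of an admissible family cannot agree off an L-free set D0. *)
Lemma M_le_exp_sub_free (D0 : {set {set V}}) :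
  D0 \subset edges n -> ~~ contains_subgraph L D0 -> M L n <= 2 ^ ('C(n, 2) - #|D0|).
Proof.
move=> sD0 freeD0; apply: M_leq => F /andP [/forall_inP graphF /forall_inP admF].
have injF : {in F &, injective (fun G => G :\: D0)}.
  move=> G H GF HF /symdiff_subsetD sGH; apply/eqP; apply: contraNT freeD0 => neqGH.
  apply: contains_subgraphS sGH _.
  by have /forall_inP/(_ H HF)/implyP := admF G GF; apply.
rewrite -(card_in_imset injF) -card_edges -(cardsDS sD0) -card_powerset.
apply/subset_leq_card/subsetP => _ /imsetP [G GF ->].
by rewrite inE setSD // -is_graphE graphF.
Qed.

Definition free_graphs : {set {set {set V}}} :=
  [set D : {set {set V}} | (D \subset edges n) && ((D == set0) || ~~ contains_subgraph L D)].

(* A maximum admissible family F cannot be enlarged, so every graph H lies in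
   some translate G (+) free_graphs with G in F. *)
Lemma M_gilbert_varshamov : 2 ^ 'C(n, 2) <= M L n * #|free_graphs|.
Proof.
have [F admF eqFM] := M_attained; rewrite -eqFM.
have /andP [/forall_inP graphF /forall_inP admFF] := admF.
rewrite -card_edges -card_powerset -sum_nat_const.
apply: (@leq_trans (\sum_(G in F) #|[set symdiff G D | D in free_graphs]|)); last first.
  by apply: leq_sum => G _; apply: leq_imset_card.
apply: card_le_sum_cover => H; rewrite inE => sH.
case HF: (H \in F).
  exists H => //; apply/imsetP; exists set0; last by rewrite symdiffG0.
  by rewrite inE sub0set eqxx.
have [[G GF freeGH] | allc] :=
  altP (@exists_inP _ (mem F) (fun G => ~~ contains_subgraph L (symdiff G H))).
  exists G => //; apply/imsetP; exists (symdiff G H); last by rewrite symdiffK.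
  by rewrite inE freeGH orbT andbT symdiff_subset // -is_graphE graphF.
have containsGH G : G \in F -> contains_subgraph L (symdiff G H).
  by move=> GF; apply: contraNT allc => freeGH; apply/exists_inP; exists G.
suff /leq_card_M : admissible L (H |: F) by rewrite cardsU1 HF -eqFM ltnn.
apply/andP; split.
  by apply/forall_inP => G /setU1P [->|/graphF //]; rewrite is_graphE.
apply/forall_inP => G1 /setU1P [->|G1F]; apply/forall_inP => G2 /setU1P [->|G2F];
  apply/implyP => neq.
- by rewrite eqxx in neq.
- by rewrite symdiffC containsGH.
- exact: containsGH.
- by have /forall_inP/(_ G2 G2F)/implyP := admFF G1 G1F; apply.
Qed.

End MaxFamily.

(** * The Kovari-Sos-Turan bound *)

Lemma mem_Ktt t e : e \in Ktt t -> exists i j, e = [set lshift t i; rshift t j].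
Proof. by case/imset2P => i j _ _ ->; exists i, j. Qed.

Lemma card_Ktt t : #|Ktt t| = t * t.
Proof.
pose e (p : 'I_t * 'I_t) : {set 'I_(t + t)} := [set lshift t p.1; rshift t p.2].
have -> : Ktt t = e @: [set: 'I_t * 'I_t].
  apply/setP => x; apply/imset2P/imsetP => [[i j _ _ ->] | [[i j] _ ->]].
    by exists (i, j).
  by exists i j.
rewrite card_imset ?cardsT ?card_prod ?card_ord // => -[i j] [i' j'] /= eq_e.
have : lshift t i \in e (i', j') by rewrite -eq_e !inE eqxx.
have : rshift t j \in e (i', j') by rewrite -eq_e !inE eqxx orbT.
by rewrite !inE !eq_shift /= orbF => /eqP -> /eqP ->.
Qed.

Section Embedding.
Variables (n : nat) (D : {set {set 'I_n}}).
Hypothesis sD : D \subset edges n.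

Lemma contains_Ktt t (S T : {set 'I_n}) : t <= #|S| -> t <= #|T| ->
  (forall u v, u \in S -> v \in T -> [set u; v] \in D) -> contains_subgraph (Ktt t) D.
Proof.
move=> leS leT DST.
pose g (k : 'I_(t + t)) : 'I_n := match split k with
  | inl i => enum_val (widen_ord leS i) | inr j => enum_val (widen_ord leT j) end.
have gl i : g (lshift t i) = enum_val (widen_ord leS i) by rewrite /g (unsplitK (inl _ i)).
have gr j : g (rshift t j) = enum_val (widen_ord leT j) by rewrite /g (unsplitK (inr _ j)).
have disjST x : x \in S -> x \in T -> False.
  move=> xS xT; have := subsetP sD _ (DST x x xS xT).
  by rewrite setUid inE cards1.
apply/existsP; exists [ffun k => g k]; apply/andP; split.
  apply/injectiveP => k1 k2; rewrite !ffunE.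
  case: (split_ordP k1) => [i1 ->|j1 ->]; case: (split_ordP k2) => [i2 ->|j2 ->];
    rewrite ?gl ?gr.
  - by move/enum_val_inj/(congr1 val) => /= eq_i; congr lshift; apply: val_inj.
  - move=> eqST; case: (disjST (enum_val (widen_ord leS i1))); first exact: enum_valP.
    by rewrite eqST; apply: enum_valP.
  - move=> eqTS; case: (disjST (enum_val (widen_ord leS i2))); first exact: enum_valP.
    by rewrite -eqTS; apply: enum_valP.
  - by move/enum_val_inj/(congr1 val) => /= eq_j; congr rshift; apply: val_inj.
apply/forall_inP => e /mem_Ktt [i [j ->]].
by rewrite imsetU1 imset_set1 !ffunE gl gr; apply: DST; apply: enum_valP.
Qed.

End Embedding.

Lemma expn_sub_le_ffact d t : (d - t) ^ t <= d ^_ t.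
Proof.
suff le_i i : i <= t -> (d - t) ^ i <= d ^_ i by exact: le_i.
elim: i => [|i IHi] lt_it; first by rewrite ffactn0 expn0.
by rewrite expnSr ffactnSr leq_mul ?IHi //; lia.
Qed.

Lemma ffact_le_expn d t : d ^_ t <= d ^ t.
Proof.
elim: t => [|t IHt]; first by rewrite ffactn0 expn0.
by rewrite expnSr ffactnSr leq_mul // leq_subr.
Qed.

Lemma leq_expn2r m n e : m <= n -> m ^ e <= n ^ e.
Proof. by case: e => [//|e]; rewrite leq_exp2r. Qed.

Lemma bin2_double n : 2 * 'C(n, 2) = n * n.-1.
Proof. by rewrite -(mul_bin_diag n 1) bin1. Qed.

(* H counts the vertices of degree at least d, and E the edges. *)
Lemma kovari_sos_turan_arith (n t r d H E : nat) :
  0 < r -> (8 * r) ^ t.+1 <= n -> d = n %/ (2 * r) ->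
  H * (d - t) ^ t <= t * n ^ t -> 2 * E <= H * n + n * d -> E * r <= 'C(n, 2).
Proof.
move=> r_gt0 le_n d_def le_H le_E.
have pow_4r_gt0 : 0 < (4 * r) ^ t by rewrite expn_gt0; lia.
have t_le : t.+1 <= 2 ^ t * (4 * r) ^ t.
  by apply: leq_trans (ltn_expl t (isT : 1 < 2)) _; rewrite leq_pmulr.
have split_8r : (8 * r) ^ t.+1 = 8 * r * (2 ^ t * (4 * r) ^ t).
  by rewrite expnS -expnMn mulnA.
have t_small : 8 * r * (t * (4 * r) ^ t) <= n.
  apply: leq_trans le_n; rewrite split_8r leq_mul2l; apply/orP; right.
  by rewrite leq_mul2r (ltnW (ltn_expl t (isT : 1 < 2))) orbT.
have le_d : n <= (d - t) * (4 * r).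
  have := ltn_ceil n (_ : 0 < 2 * r); rewrite -d_def => /(_ ltac:(lia)) lt_nd.
  have : 4 * r * t.+1 <= n.
    by apply: leq_trans le_n; rewrite split_8r; apply: leq_mul t_le; lia.
  rewrite mulnBl; move: lt_nd; clear; nia.
have dt_gt0 : 0 < (d - t) ^ t by rewrite expn_gt0; move: le_d r_gt0 le_n; clear; nia.
have H_small : H <= t * (4 * r) ^ t.
  rewrite -(leq_pmul2r dt_gt0); apply: leq_trans le_H _.
  by rewrite -mulnA -expnMn leq_mul2l leq_expn2r ?orbT // mulnC.
have rH_small : 8 * (r * H) <= n.
  by apply: leq_trans t_small; rewrite mulnA leq_mul2l H_small orbT.
have rd_small : 2 * (r * d) <= n by rewrite mulnA mulnC d_def leq_divM.
have sum_small : r * H + r * d <= n.-1 by move: rH_small rd_small; clear; lia.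
have rE : 2 * E * r <= n * (r * H + r * d).
  by apply: leq_trans (leq_mul le_E (leqnn r)) _; rewrite mulnDl mulnDr; lia.
rewrite -(leq_pmul2l (_ : 0 < 2)) // bin2_double mulnA.
by apply: leq_trans rE _; rewrite leq_mul2l sum_small orbT.
Qed.

Section KovariSosTuran.
Variables (n : nat) (D : {set {set 'I_n}}).
Hypothesis sD : D \subset edges n.
Local Notation V := 'I_n.

Definition nbhd (v : V) : {set V} := [set u | [set u; v] \in D].

Definition common_nbhd (S : {set V}) : {set V} := [set v | S \subset nbhd v].

Definition high_deg (d : nat) : {set V} := [set v | d <= #|nbhd v|].

Lemma handshake_le : 2 * #|D| <= \sum_v #|nbhd v|.
Proof.
have -> : 2 * #|D| = \sum_(e in D) \sum_v (v \in e : nat).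
  rewrite mulnC -sum_nat_const; apply: eq_bigr => e eD.
  by rewrite sum_mem_card; have := subsetP sD e eD; rewrite inE => /eqP.
rewrite exchange_big /=; apply: leq_sum => v _.
rewrite -big_mkcondr /= sum_nat_cond_const muln1.
apply: (@leq_trans #|[set [set u; v] | u in nbhd v]|); last exact: leq_imset_card.
apply/subset_leq_card/subsetP => e; rewrite inE => /andP [eD ve].
have := subsetP sD e eD; rewrite inE => /cards2P [x [y [_ exy]]].
move: ve eD; rewrite exy !inE => /orP [] /eqP -> exyD; apply/imsetP.
  by exists y; rewrite ?inE setUC.
by exists x; rewrite ?inE.
Qed.

Lemma sum_bin_deg t :
  \sum_v 'C(#|nbhd v|, t) = \sum_(S : {set V} | #|S| == t) #|common_nbhd S|.
Proof.
under eq_bigr => v _ do rewrite -cards_draws -sum_mem_card.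
rewrite exchange_big /= [RHS]big_mkcond /=; apply: eq_bigr => S _.
have [St | nSt] := eqVneq #|S| t; last by rewrite big1 // => v _; rewrite inE (negbTE nSt) andbF.
by rewrite -sum_mem_card; apply: eq_bigr => v _; rewrite !inE St eqxx andbT.
Qed.

Lemma card_common_nbhd_lt t (S : {set V}) :
  ~~ contains_subgraph (Ktt t) D -> #|S| = t -> #|common_nbhd S| < t.
Proof.
move=> freeD St; rewrite ltnNge; apply: contra freeD => le_t.
apply: (contains_Ktt sD (S := S) (T := common_nbhd S)) => [||u v uS]; rewrite ?St //.
by rewrite inE => /subsetP /(_ u uS); rewrite inE.
Qed.

Lemma sum_bin_deg_le t :
  ~~ contains_subgraph (Ktt t) D -> \sum_v 'C(#|nbhd v|, t) <= t * 'C(n, t).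
Proof.
move=> freeD; rewrite sum_bin_deg -[X in 'C(X, t)]card_ord -card_draws.
rewrite -sum1dep_card big_distrr /= muln1; apply: leq_sum => S /eqP St.
exact/ltnW/card_common_nbhd_lt.
Qed.

Lemma card_high_deg_bin_le t d : #|high_deg d| * 'C(d, t) <= \sum_v 'C(#|nbhd v|, t).
Proof.
rewrite -sum_nat_const [X in _ <= X](bigID (mem (high_deg d))) /=; apply: leq_trans (leq_addr _ _).
by apply: leq_sum => v; rewrite inE; apply: leq_bin2l.
Qed.

Lemma sum_deg_le d : \sum_v #|nbhd v| <= #|high_deg d| * n + n * d.
Proof.
rewrite (bigID (mem (high_deg d))) /=; apply: leq_add.
  rewrite -sum_nat_const; apply: leq_sum => v _.
  by rewrite -[X in _ <= X]card_ord max_card.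
rewrite -[X in X * d]card_ord -sum_nat_const [X in _ <= X](bigID (mem (high_deg d))) /=.
by apply: leq_trans (leq_addl _ _); apply: leq_sum => v; rewrite inE -ltnNge => /ltnW.
Qed.

Lemma card_high_deg_le t d :
  ~~ contains_subgraph (Ktt t) D -> #|high_deg d| * (d - t) ^ t <= t * n ^ t.
Proof.
move=> freeD; have := leq_trans (card_high_deg_bin_le t d) (sum_bin_deg_le freeD).
rewrite -(leq_pmul2r (fact_gt0 t)) -!mulnA !bin_ffact => le_ffact.
apply: leq_trans (leq_trans le_ffact _).
  by rewrite leq_mul2l expn_sub_le_ffact orbT.
by rewrite leq_mul2l ffact_le_expn orbT.
Qed.

Theorem kovari_sos_turan t r : ~~ contains_subgraph (Ktt t) D -> 0 < r -> (8 * r) ^ t.+1 <= n ->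
  #|D| * r <= 'C(n, 2).
Proof.
move=> freeD r_gt0 le_n; pose d := n %/ (2 * r).
apply: (kovari_sos_turan_arith r_gt0 le_n (erefl d) (card_high_deg_le d freeD)).
exact: leq_trans handshake_le (sum_deg_le d).
Qed.

End KovariSosTuran.

(** * Bounds on M for K_{t,t} *)

Lemma M_Ktt_lower_bound n t q r : 0 < q -> 0 < r -> (8 * r) ^ t.+1 <= n ->
  2 ^ 'C(n, 2) * q ^ ('C(n, 2) - 'C(n, 2) %/ r) <= M (Ktt t) n * q.+1 ^ 'C(n, 2).
Proof.
move=> q_gt0 r_gt0 le_n.
have free_small : free_graphs n (Ktt t) \subset
    [set D : {set {set 'I_n}} | (D \subset edges n) && (#|D| <= 'C(n, 2) %/ r)].
  apply/subsetP => D; rewrite !inE => /andP [sD /orP [/eqP -> | freeD]].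
    by rewrite sub0set cards0.
  by rewrite sD leq_divRL // (kovari_sos_turan sD freeD).
have := card_small_subsets q_gt0 (leq_div #|edges n| r); rewrite card_edges => le_small.
apply: leq_trans (leq_mul (M_gilbert_varshamov n (Ktt t)) (leqnn _)) _.
rewrite -mulnA leq_mul2l; apply/orP; right; apply: leq_trans le_small.
by rewrite leq_mul2r subset_leq_card ?orbT.
Qed.

Lemma bin_mul_ffact_shift s : forall N m, s <= m -> m <= N ->
  'C(N, m) * m ^_ s = 'C(N - s, m - s) * N ^_ s.
Proof.
elim: s => [|s IHs] N m le_sm le_mN; first by rewrite !ffactn0 !subn0.
case: m le_sm le_mN => [//|m] le_sm le_mN; case: N le_mN => [//|N] le_mN.
rewrite !ffactnS /= !subSS mulnA [_ * m.+1]mulnC -mul_bin_diag /= -mulnA IHs //.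
by rewrite mulnCA.
Qed.

Lemma ffact_mul_expn_le m N s : m <= N -> m ^_ s * N ^ s <= N ^_ s * m ^ s.
Proof.
move=> le_mN; elim: s => [|s IHs]; first by rewrite !ffactn0 !expn0.
rewrite !ffactnSr !expnSr.
have le_step : (m - s) * N <= (N - s) * m.
  by rewrite !mulnBl mulnC leq_sub2l // leq_mul2l le_mN orbT.
by move: (leq_mul IHs le_step); rewrite mulnACA [X in _ <= X]mulnACA.
Qed.

(* The proportion of m-subsets of an N-set containing a fixed (t*t)-set is at
   most (m/N)^(t*t). *)
Lemma bin_sub_lt n t m N : 0 < t -> t * t <= m -> m <= N -> n ^ 2 * m ^ t < N ^ t ->
  n ^ (t + t) * 'C(N - t * t, m - t * t) < 'C(N, m).
Proof.
move=> t_gt0 le_ttm le_mN lt_nmN.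
set s := t * t.
have le_sN : s <= N by apply: leq_trans le_mN.
have N_gt0 : 0 < N by apply: leq_trans le_sN; rewrite /s muln_gt0 t_gt0.
have ffact_gt0 : 0 < N ^_ s by rewrite ffact_gt0.
rewrite -(ltn_pmul2r ffact_gt0) -mulnA -bin_mul_ffact_shift // mulnCA ltn_pmul2l ?bin_gt0 //.
have lt_pow : n ^ (t + t) * m ^ s < N ^ s.
  have -> : n ^ (t + t) = (n ^ 2) ^ t by rewrite -expnM mul2n addnn.
  by rewrite /s !expnM -expnMn ltn_exp2r.
rewrite -(ltn_pmul2r (_ : 0 < N ^ s)) ?expn_gt0 ?N_gt0 //.
apply: (@leq_ltn_trans (n ^ (t + t) * (N ^_ s * m ^ s))).
  by rewrite -mulnA leq_mul2l ffact_mul_expn_le ?orbT.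
by rewrite mulnCA ltn_pmul2l.
Qed.

Lemma exists_Ktt_free n t m :
  n ^ (t + t) * 'C('C(n, 2) - t * t, m - t * t) < 'C('C(n, 2), m) ->
  exists D0 : {set {set 'I_n}},
    [/\ D0 \subset edges n, #|D0| = m & ~~ contains_subgraph (Ktt t) D0].
Proof.
move=> lt_count.
pose graphs_m := [set D : {set {set 'I_n}} | (D \subset edges n) && (#|D| == m)].
pose copy (f : {ffun 'I_(t + t) -> 'I_n}) := [set f @: e | e : {set 'I_(t + t)} in Ktt t].
pose above f := [set D : {set {set 'I_n}} | [&& D \subset edges n, #|D| == m & copy f \subset D]].
have card_above (f : {ffun 'I_(t + t) -> 'I_n}) :
    injectiveb f -> #|above f| <= 'C('C(n, 2) - t * t, m - t * t).
  move=> /injectiveP f_inj.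
  have card_copy : #|copy f| = t * t by rewrite card_imset ?card_Ktt //; apply: imset_inj.
  have copy_edges : copy f \subset edges n.
    apply/subsetP => _ /imsetP [e /mem_Ktt [i [j ->]] ->].
    by rewrite inE card_imset // cards2 eq_shift.
  by have := card_supersets_le m copy_edges; rewrite card_copy card_edges.
case: (boolP [exists D in graphs_m, ~~ contains_subgraph (Ktt t) D]) => [|all_contain].
  by case/exists_inP => D0; rewrite inE => /andP [sD0 /eqP cardD0] freeD0; exists D0.
suff : #|graphs_m| <= n ^ (t + t) * 'C('C(n, 2) - t * t, m - t * t).
  by rewrite cards_draws card_edges leqNgt lt_count.
apply: (@leq_trans (\sum_(f : {ffun 'I_(t + t) -> 'I_n} | injectiveb f) #|above f|)).
  apply: card_le_sum_cover => D D_m.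
  have /existsP [f /andP [f_inj /forall_inP fKtt]] : contains_subgraph (Ktt t) D.
    by apply: contraNT all_contain => freeD; apply/exists_inP; exists D.
  exists f => //; move: D_m; rewrite /above /graphs_m !inE => /andP [-> ->] /=.
  by apply/subsetP => _ /imsetP [e eK ->]; apply: fKtt.
apply: (@leq_trans (\sum_(f : {ffun 'I_(t + t) -> 'I_n}) 'C('C(n, 2) - t * t, m - t * t))).
  rewrite [X in _ <= X](bigID (fun f : {ffun 'I_(t + t) -> 'I_n} => injectiveb f)) /=.
  apply: leq_trans (leq_addr _ _).
  exact: leq_sum.
by rewrite sum_nat_const card_ffun !card_ord.
Qed.

Lemma M_Ktt_upper_bound n t m : 0 < t -> t * t <= m -> m <= 'C(n, 2) ->
  n ^ 2 * m ^ t < 'C(n, 2) ^ t -> M (Ktt t) n <= 2 ^ ('C(n, 2) - m).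
Proof.
move=> t_gt0 le_ttm le_mN lt_nmN.
have [D0 [sD0 <- freeD0]] := exists_Ktt_free (bin_sub_lt t_gt0 le_ttm le_mN lt_nmN).
exact: M_le_exp_sub_free.
Qed.

(** * Logarithmic estimates *)

Open Scope R_scope.

Lemma INR_muln a b : INR (a * b) = INR a * INR b.
Proof. by rewrite -multE mult_INR. Qed.

Lemma INR_expn a k : INR (a ^ k) = INR a ^ k.
Proof. by elim: k => [|k IHk]; rewrite ?expn0 // expnS INR_muln IHk. Qed.

Lemma INR_subn a b : (b <= a)%N -> INR (a - b) = INR a - INR b.
Proof. by move/leP => le_ba; rewrite -minusE minus_INR. Qed.

Lemma INR_leq a b : (a <= b)%N -> INR a <= INR b.
Proof. by move/leP; apply: le_INR. Qed.

Lemma INR_ltn a b : (a < b)%N -> INR a < INR b.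
Proof. by move/ltP; apply: lt_INR. Qed.

Lemma INR_leqP a b : INR a <= INR b -> (a <= b)%N.
Proof. by move/INR_le/leP. Qed.

Lemma INR_ltnP a b : INR a < INR b -> (a < b)%N.
Proof. by move/INR_lt/ltP. Qed.

Lemma INR_gt0 a : (0 < a)%N -> 0 < INR a.
Proof. exact: (@INR_ltn 0). Qed.

Lemma ln2_gt0 : 0 < ln 2.
Proof. by have := ln_lt_2; lra. Qed.

Lemma log2_mult x y : 0 < x -> 0 < y -> log2 (x * y) = log2 x + log2 y.
Proof. by move=> x_gt0 y_gt0; rewrite /log2 ln_mult // /Rdiv Rmult_plus_distr_r. Qed.

Lemma log2_pow x k : 0 < x -> log2 (x ^ k) = INR k * log2 x.
Proof. by move=> x_gt0; rewrite /log2 ln_pow // /Rdiv Rmult_assoc. Qed.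

Lemma log2_le x y : 0 < x -> x <= y -> log2 x <= log2 y.
Proof.
move=> x_gt0 le_xy; rewrite /log2; apply: Rmult_le_compat_r; last exact: ln_le.
exact/Rlt_le/Rinv_0_lt_compat/ln2_gt0.
Qed.

Lemma log2_lt x y : 0 < x -> x < y -> log2 x < log2 y.
Proof.
move=> x_gt0 lt_xy; rewrite /log2; apply: Rmult_lt_compat_r; last exact: ln_increasing.
exact/Rinv_0_lt_compat/ln2_gt0.
Qed.

Lemma log2_INR_muln a b : (0 < a)%N -> (0 < b)%N ->
  log2 (INR (a * b)) = log2 (INR a) + log2 (INR b).
Proof. by move=> a_gt0 b_gt0; rewrite INR_muln log2_mult //; apply: INR_gt0. Qed.

Lemma log2_INR_expn a k : (0 < a)%N -> log2 (INR (a ^ k)) = INR k * log2 (INR a).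
Proof. by move=> a_gt0; rewrite INR_expn log2_pow //; apply: INR_gt0. Qed.

Lemma log2_INR_exp2 k : log2 (INR (2 ^ k)) = INR k.
Proof.
rewrite log2_INR_expn // (_ : INR 2 = 2) // /log2.
by field; have := ln2_gt0; lra.
Qed.

Lemma log2_INR_leq a b : (0 < a)%N -> (a <= b)%N -> log2 (INR a) <= log2 (INR b).
Proof. by move=> a_gt0 /INR_leq; apply/log2_le/INR_gt0. Qed.

Lemma log2_INR_ge0 a : (0 < a)%N -> 0 <= log2 (INR a).
Proof.
by move=> a_gt0; have := log2_INR_leq (isT : (0 < 2 ^ 0)%N) a_gt0; rewrite log2_INR_exp2.
Qed.

Lemma log2_INR_lt a : (0 < a)%N -> log2 (INR a) < INR a.
Proof.
move=> a_gt0; rewrite -[X in _ < X]log2_INR_exp2.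
by apply: log2_lt; [exact: INR_gt0 | apply/INR_ltn/ltn_expl].
Qed.

Lemma exp2_ltn_of_log2 a n : (0 < n)%N -> INR a < log2 (INR n) -> (2 ^ a < n)%N.
Proof.
move=> n_gt0; rewrite -log2_INR_exp2 ltnNge => lt_log; apply/negP => le_n.
by have := log2_INR_leq n_gt0 le_n; lra.
Qed.

Lemma log2_1p_le x : 0 < x -> log2 (1 + x) <= 2 * x.
Proof.
move=> x_gt0; have ln_le_x : ln (1 + x) <= x.
  by rewrite -[X in _ <= X]ln_exp; apply: ln_le; [lra | apply: exp_ineq1_le].
rewrite /log2; apply: (Rmult_le_reg_r (ln 2)); first exact: ln2_gt0.
by rewrite /Rdiv Rmult_assoc Rinv_l; have := ln_lt_2; nra.
Qed.

Lemma log2_succ_le q : (0 < q)%N -> log2 (INR q.+1) <= log2 (INR q) + 2 / INR q.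
Proof.
move=> q_gt0; have Q_gt0 := INR_gt0 q_gt0; have iQ_gt0 := Rinv_0_lt_compat _ Q_gt0.
rewrite S_INR (_ : INR q + 1 = INR q * (1 + / INR q)); last by field; lra.
rewrite log2_mult //; last lra.
by have := log2_1p_le iQ_gt0; rewrite /Rdiv; lra.
Qed.

(* Taking log2 of the counting bound of M_Ktt_lower_bound, with r = q^2. *)
Lemma log2_ratio_ge (N q m Mv : nat) : (0 < N)%N -> (0 < q)%N -> (0 < Mv)%N ->
  (m * (q * q) <= N)%N -> (2 ^ N * q ^ (N - m) <= Mv * q.+1 ^ N)%N ->
  1 - 3 / INR q <= log2 (INR Mv) / INR N.
Proof.
move=> N_gt0 q_gt0 Mv_gt0 le_mN le_count.
have Q_gt0 := INR_gt0 q_gt0; have NR_gt0 := INR_gt0 N_gt0.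
have le_m : (m <= N)%N by apply: leq_trans le_mN; apply: leq_pmulr; rewrite muln_gt0 q_gt0.
have pos_lhs : (0 < 2 ^ N * q ^ (N - m))%N by rewrite muln_gt0 !expn_gt0 q_gt0.
have := log2_INR_leq pos_lhs le_count.
rewrite !log2_INR_muln ?expn_gt0 ?q_gt0 // log2_INR_exp2 !log2_INR_expn // INR_subn // => le_logs.
have m_log : INR m * log2 (INR q) * INR q <= INR N.
  have := INR_leq le_mN; rewrite !INR_muln; have := log2_INR_lt q_gt0.
  have := log2_INR_ge0 q_gt0; have := pos_INR m; nra.
have m_log' : INR m * log2 (INR q) <= INR N / INR q.
  apply: (Rmult_le_reg_r (INR q)) => //.
  by have -> : INR N / INR q * INR q = INR N by field; lra.
have succ_log : INR N * log2 (INR q.+1) <= INR N * log2 (INR q) + 2 * (INR N / INR q).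
  by have := Rmult_le_compat_l _ _ _ (Rlt_le _ _ NR_gt0) (log2_succ_le q_gt0); rewrite /Rdiv; lra.
apply: (Rmult_le_reg_r (INR N)) => //.
have -> : log2 (INR Mv) / INR N * INR N = log2 (INR Mv) by field; lra.
have -> : (1 - 3 / INR q) * INR N = INR N - 3 * (INR N / INR q) by field; lra.
nra.
Qed.

Lemma log2_ratio_le (N m Mv : nat) : (0 < N)%N -> (0 < Mv)%N -> (m <= N)%N ->
  (Mv <= 2 ^ (N - m))%N -> log2 (INR Mv) / INR N <= 1 - INR m / INR N.
Proof.
move=> N_gt0 Mv_gt0 le_mN le_Mv; have NR_gt0 := INR_gt0 N_gt0.
have := log2_INR_leq Mv_gt0 le_Mv; rewrite log2_INR_exp2 INR_subn // => le_log.
apply: (Rmult_le_reg_r (INR N)) => //.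
have -> : log2 (INR Mv) / INR N * INR N = log2 (INR Mv) by field; lra.
by have -> : (1 - INR m / INR N) * INR N = INR N - INR m by field; lra.
Qed.

Lemma ratio_le_1 t n : (2 <= n)%N -> ratio t n <= 1.
Proof.
move=> le_2n; have := @log2_ratio_le 'C(n, 2) 0 (M (Ktt (t n)) n).
rewrite bin_gt0 M_gt0 subn0 M_le_exp_binom Rdiv_0_l Rminus_0_r; exact.
Qed.

Lemma ratio_lower_bound t n q : (2 <= n)%N -> (0 < q)%N ->
  ((8 * (q * q)) ^ (t n).+1 <= n)%N -> 1 - 3 / INR q <= ratio t n.
Proof.
move=> le_2n q_gt0 le_n; apply: (log2_ratio_ge (m := 'C(n, 2) %/ (q * q))).
- by rewrite bin_gt0.
- exact: q_gt0.
- exact: M_gt0.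
- exact: leq_divM.
by apply: M_Ktt_lower_bound; rewrite ?muln_gt0 ?q_gt0.
Qed.

Lemma ratio_upper_bound t n p : 0 < p -> p < 1 -> (2 <= n)%N ->
  INR n ^ 2 * p ^ t n < 1 -> INR (t n * t n) + 1 <= p * INR 'C(n, 2) ->
  ratio t n <= 1 - p + / INR 'C(n, 2).
Proof.
move=> p_gt0 p_lt1 le_2n small_pow small_t.
have N_gt0 : (0 < 'C(n, 2))%N by rewrite bin_gt0.
have NR_gt0 := INR_gt0 N_gt0.
have [m [le_m lt_m]] := nfloor_ex (p * INR 'C(n, 2)) (ltac:(nra)).
have nR_ge2 : 2 <= INR n by apply: (INR_leq le_2n).
have t_gt0 : (0 < t n)%N.
  by case: (t n) small_pow => [|//] /=; nra.
have le_mN : (m <= 'C(n, 2))%N by apply: INR_leqP; nra.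
have le_ttm : (t n * t n <= m)%N by rewrite -ltnS; apply: INR_ltnP; rewrite S_INR; lra.
have lt_pow : (n ^ 2 * m ^ t n < 'C(n, 2) ^ t n)%N.
  apply: INR_ltnP; rewrite !INR_muln !INR_expn.
  have le_pow : INR m ^ t n <= (p * INR 'C(n, 2)) ^ t n.
    by apply: pow_incr; split; [apply: pos_INR|].
  have pow_gt0 : 0 < INR 'C(n, 2) ^ t n by apply: pow_lt.
  rewrite Rpow_mult_distr in le_pow; nra.
have := log2_ratio_le N_gt0 (M_gt0 _ _) le_mN (M_Ktt_upper_bound t_gt0 le_ttm le_mN lt_pow).
rewrite -/(ratio t n) => le_ratio.
suff : p - / INR 'C(n, 2) <= INR m / INR 'C(n, 2) by lra.
apply: (Rmult_le_reg_r (INR 'C(n, 2))) => //.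
have -> : INR m / INR 'C(n, 2) * INR 'C(n, 2) = INR m by field; lra.
have -> : (p - / INR 'C(n, 2)) * INR 'C(n, 2) = p * INR 'C(n, 2) - 1 by field; lra.
lra.
Qed.

(** * Asymptotics *)

Lemma eventually_and (P Q : nat -> Prop) :
  eventually P -> eventually Q -> eventually (fun n => P n /\ Q n).
Proof. exact: filter_and. Qed.

Lemma eventually_mono (P Q : nat -> Prop) :
  eventually P -> (forall n, P n -> Q n) -> eventually Q.
Proof. by move=> evP PQ; apply: filter_imp evP. Qed.

Lemma eventually_geq k : eventually (fun n => (k <= n)%N).
Proof. by exists k => n /leP. Qed.

Lemma log2_gt0 n : (2 <= n)%N -> 0 < log2 (INR n).
Proof.
move=> le_2n; rewrite /log2; apply: Rdiv_lt_0_compat; last exact: ln2_gt0.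
by rewrite -ln_1; apply: ln_increasing; [lra | apply: (INR_ltn le_2n)].
Qed.

Lemma eventually_pow_lt (t : nat -> nat) :
  is_lim_seq (fun n => INR (t n) / log2 (INR n)) 0 ->
  forall b, eventually (fun n => (b ^ (t n).+1 < n)%N).
Proof.
move=> /is_lim_seq_spec lim_t b; have bS_gt0 : 0 < INR b.+1 by apply: INR_gt0.
have eps_gt0 : 0 < / (2 * INR b.+1) by apply: Rinv_0_lt_compat; lra.
apply: (eventually_mono (eventually_and (lim_t (mkposreal _ eps_gt0))
  (eventually_and (eventually_geq 2) (eventually_geq (2 ^ (2 * b))))))
  => n [/= lt_t [le_2n le_bn]].
have log_gt0 := log2_gt0 le_2n.
have le_b : 2 * INR b <= log2 (INR n).
  have -> : 2 * INR b = INR (2 * b) by rewrite INR_muln.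
  by rewrite -log2_INR_exp2; apply: log2_INR_leq le_bn; rewrite expn_gt0.
have lt_bt : 2 * INR b.+1 * INR (t n) < log2 (INR n).
  have /(Rlt_div_l _ _ _ log_gt0) : INR (t n) / log2 (INR n) < / (2 * INR b.+1).
    by move: lt_t; rewrite Rminus_0_r; apply: Rle_lt_trans (Rle_abs _).
  have : 2 * INR b.+1 * / (2 * INR b.+1) = 1 by field; lra.
  nra.
apply: leq_ltn_trans (exp2_ltn_of_log2 (a := b * (t n).+1) _ _).
- by rewrite expnM; apply/leq_expn2r/ltnW/ltn_expl.
- exact: leq_trans le_2n.
by rewrite INR_muln S_INR; rewrite S_INR in lt_bt; have := pos_INR (t n); nra.
Qed.

Lemma log2_sq_lt y : 1 <= y -> log2 y ^ 2 < 16 * y.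
Proof.
move=> y_ge1; have sy_gt0 : 0 < sqrt y by apply: sqrt_lt_R0; lra.
have ln_sqrt : ln (sqrt y) < sqrt y.
  rewrite -[X in _ < X]ln_exp; apply: ln_increasing => //.
  by have := exp_ineq1 (sqrt y) ltac:(lra); lra.
have ln_eq : ln y = 2 * ln (sqrt y) by rewrite -{1}(sqrt_sqrt y) ?ln_mult //; lra.
have ln_ge0 : 0 <= ln y by rewrite -ln_1; apply: ln_le; lra.
have log_le : log2 y <= 2 * ln y.
  rewrite /log2; apply: (Rmult_le_reg_r (ln 2)); first exact: ln2_gt0.
  have -> : ln y / ln 2 * ln 2 = ln y by field; have := ln2_gt0; lra.
  by have := ln_lt_2; nra.
have log_ge0 : 0 <= log2 y.
  by apply: Rdiv_le_0_compat => //; exact: ln2_gt0.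
have := sqrt_sqrt y ltac:(lra); nra.
Qed.

Lemma INR_bin2 n : INR 'C(n, 2) = INR n * (INR n - 1) / 2.
Proof.
case: n => [|n]; first by rewrite bin0n /=; lra.
have := congr1 INR (bin2_double n.+1); rewrite !INR_muln succnK (_ : INR 2 = 2) // (S_INR n).
lra.
Qed.

Lemma eventually_log2_sq_le (K x p : R) : 0 < p -> 0 <= x ->
  eventually (fun n => (K * log2 (INR n)) ^ 2 + x <= p * INR 'C(n, 2)).
Proof.
move=> p_gt0 x_ge0; set B := 2 * (16 * K ^ 2 + x) / p.
have B_ge0 : 0 <= B by apply: Rdiv_le_0_compat => //; nra.
have [k [_ lt_k]] := nfloor_ex B B_ge0.
apply: (eventually_mono (eventually_geq k.+2)) => n le_kn.
have n_ge : INR k + 2 <= INR n by have := INR_leq le_kn; rewrite !S_INR; lra.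
have sq_le := log2_sq_lt (ltac:(have := pos_INR k; lra) : 1 <= INR n).
have B_le : p * (INR n - 1) >= 2 * (16 * K ^ 2 + x).
  have -> : 2 * (16 * K ^ 2 + x) = p * B by rewrite /B; field; lra.
  nra.
rewrite INR_bin2; have := pos_INR k; nra.
Qed.

Lemma eventually_lt_mul_log2 (t : nat -> nat) (c : R) :
  is_lim_seq (fun n => INR (t n) / log2 (INR n)) c ->
  eventually (fun n => INR (t n) < (c + 1) * log2 (INR n)).
Proof.
move=> /is_lim_seq_spec lim_t.
apply: (eventually_mono (eventually_and (lim_t (mkposreal 1 Rlt_0_1)) (eventually_geq 2))).
move=> n [/= lt_t le_2n].
have log_gt0 := log2_gt0 le_2n.
apply/(Rlt_div_l _ _ _ log_gt0).
by have := Rle_abs (INR (t n) / log2 (INR n) - c); lra.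
Qed.

(* n^2 p^t < 1 amounts to t > c' log2 n with c' = 2 / log2 (1/p), and
   p < 2^(-2/c) is exactly c' < c. *)
Lemma eventually_sq_mul_pow_lt1 (t : nat -> nat) (c p : R) : 0 < c -> 0 < p ->
  p < Rpower 2 (- (2 / c)) -> is_lim_seq (fun n => INR (t n) / log2 (INR n)) c ->
  eventually (fun n => INR n ^ 2 * p ^ t n < 1).
Proof.
move=> c_gt0 p_gt0 lt_p /is_lim_seq_spec lim_t.
have ln2_pos := ln2_gt0.
have lnp_lt : ln p < - (2 / c) * ln 2.
  by rewrite -ln_Rpower; apply: ln_increasing.
set c' := 2 * ln 2 / - ln p.
have lnp_neg : 0 < - ln p.
  have : 0 < 2 / c by apply: Rdiv_lt_0_compat; lra.
  nra.
have lt_c' : c' < c.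
  rewrite /c'; apply: (Rmult_lt_reg_r (- ln p)) => //.
  have -> : 2 * ln 2 / - ln p * - ln p = 2 * ln 2 by field; lra.
  have : c * (2 / c) = 2 by field; lra.
  nra.
have gap : 0 < c - c' by lra.
apply: (eventually_mono (eventually_and (lim_t (mkposreal _ gap)) (eventually_geq 2))).
move=> n [/= close_t le_2n]; have log_gt0 := log2_gt0 le_2n.
have n_gt0 : 0 < INR n by apply: INR_gt0; apply: leq_trans le_2n.
have gt_t : c' * log2 (INR n) < INR (t n).
  apply/(Rlt_div_r _ _ _ log_gt0).
  by have := Rle_abs (- (INR (t n) / log2 (INR n) - c)); rewrite Rabs_Ropp; lra.
have c'_log : c' * log2 (INR n) * - ln p = 2 * ln (INR n).
  by rewrite /c' /log2; field; lra.
have ln_val : ln (INR n ^ 2 * p ^ t n) = INR 2 * ln (INR n) + INR (t n) * ln p.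
  by rewrite ln_mult ?ln_pow //; apply: pow_lt.
have pow_gt0 : 0 < INR n ^ 2 * p ^ t n by apply: Rmult_lt_0_compat; apply: pow_lt.
apply: (ln_lt_inv _ _ pow_gt0 Rlt_0_1).
rewrite ln_val ln_1 (_ : INR 2 = 2) //; nra.
Qed.

Lemma LimSup_le_of_eventually (u : nat -> R) (l : R) :
  (forall eps, 0 < eps -> eventually (fun n => u n <= l + eps)) ->
  Rbar_le (LimSup_seq u) l.
Proof.
move=> ev_le; have le_eps eps : 0 < eps -> Rbar_le (LimSup_seq u) (l + eps).
  by move=> eps_gt0; rewrite -(LimSup_seq_const (l + eps)); apply/LimSup_le/ev_le.
case: (LimSup_seq u) le_eps => [x| |] le_eps //=; last exact: le_eps 1 Rlt_0_1.
by apply: Rle_plus_epsilon => eps eps_gt0; apply: le_eps.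
Qed.

Lemma ratio_cvg_1 (t : nat -> nat) :
  is_lim_seq (fun n => INR (t n) / log2 (INR n)) 0 -> is_lim_seq (ratio t) 1.
Proof.
move=> lim_t; apply/is_lim_seq_spec => eps.
have [q [lt_q q_gt0]] := archimed_cor1 (eps / 3) (ltac:(have := cond_pos eps; lra)).
have q_pos : (0 < q)%N by apply/ltP.
apply: (eventually_mono (eventually_and (eventually_pow_lt lim_t (8 * (q * q)))
          (eventually_geq 2))) => n [lt_n le_2n].
have := ratio_lower_bound le_2n q_pos (ltnW lt_n); have := ratio_le_1 t le_2n.
have : 3 / INR q < eps by move: lt_q; rewrite /Rdiv; lra.
by move=> lt_3q ge_r le_r; rewrite Rabs_left1; lra.
Qed.

Lemma eventually_ratio_le (t : nat -> nat) (c p eps : R) : 0 < c ->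
  is_lim_seq (fun n => INR (t n) / log2 (INR n)) c ->
  0 < p -> p < Rpower 2 (- (2 / c)) -> 0 < eps ->
  eventually (fun n => ratio t n <= 1 - p + eps).
Proof.
move=> c_gt0 lim_t p_gt0 lt_p eps_gt0.
have p_lt1 : p < 1.
  have : 0 < 2 / c by apply: Rdiv_lt_0_compat; lra.
  move=> two_c_gt0; apply: (Rlt_trans _ _ _ lt_p); rewrite -(Rpower_O 2); last lra.
  by apply: Rpower_lt; lra.
have inv_eps_ge0 : 0 <= / eps by apply/Rlt_le/Rinv_0_lt_compat.
apply: (eventually_mono (eventually_and (eventually_sq_mul_pow_lt1 c_gt0 p_gt0 lt_p lim_t)
  (eventually_and (eventually_lt_mul_log2 lim_t)
  (eventually_and (eventually_log2_sq_le (c + 1) p_gt0 Rle_0_1)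
  (eventually_and (eventually_log2_sq_le 0 Rlt_0_1 inv_eps_ge0) (eventually_geq 2))))))
  => n [small_pow [lt_t [le_sq [large_N le_2n]]]].
have N_gt0 : 0 < INR 'C(n, 2) by apply: INR_gt0; rewrite bin_gt0.
have le_window : ratio t n <= 1 - p + / INR 'C(n, 2).
  apply: ratio_upper_bound => //; rewrite INR_muln.
  by have := pos_INR (t n); nra.
suff : / INR 'C(n, 2) <= eps by lra.
rewrite -(Rinv_inv eps); apply: Rinv_le_contravar; first exact: Rinv_0_lt_compat.
lra.
Qed.

Lemma LimSup_ratio_le (t : nat -> nat) (c : R) : 0 < c ->
  is_lim_seq (fun n => INR (t n) / log2 (INR n)) c ->
  Rbar_le (LimSup_seq (ratio t)) (1 - Rpower 2 (- (2 / c))).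
Proof.
move=> c_gt0 lim_t; apply: LimSup_le_of_eventually => eps eps_gt0.
set L := Rpower 2 (- (2 / c)); have L_gt0 : 0 < L by apply: exp_pos.
set p := L - Rmin (eps / 2) (L / 2).
have := Rmin_l (eps / 2) (L / 2); have := Rmin_r (eps / 2) (L / 2).
have : 0 < Rmin (eps / 2) (L / 2) by apply: Rmin_pos; lra.
move=> min_gt0 min_le_L min_le_eps.
have p_gt0 : 0 < p by rewrite /p; lra.
have lt_pL : p < L by rewrite /p; lra.
have half_eps : 0 < eps / 2 by lra.
apply: (eventually_mono (eventually_ratio_le c_gt0 lim_t p_gt0 lt_pL half_eps)) => n.
by rewrite /p; lra.
Qed.

Theorem theorem1p5 :
  (forall t : nat -> nat,
     is_lim_seq (fun n => Rdiv (INR (t n)) (log2 (INR n))) (Rbar.Finite R0) ->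
     is_lim_seq (ratio t) (Rbar.Finite R1))
  /\
  (forall (c : R) (t : nat -> nat), Rlt R0 c ->
     is_lim_seq (fun n => Rdiv (INR (t n)) (log2 (INR n))) (Rbar.Finite c) ->
     Rbar_le (LimSup_seq (ratio t))
             (Rbar.Finite (Rminus R1 (Rpower (IZR 2) (Ropp (Rdiv (IZR 2) c)))))).
Proof.
split; first exact: ratio_cvg_1.
by move=> c t; apply: LimSup_ratio_le.
Qed.
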